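(* Let $k\ge3$. There is no family of bijections $\omega_n:\mathcal S_n\to\mathfrak S_{n+1}(1243,2143)$, $n\ge0$, such that for every $n$ and every $\pi\in\mathcal S_n$, $\tau_k(\pi)$ equals the number of subsequences of type $213\ldots k$ in $\omega_n(\pi)$.
   Context: $\mathcal S_n$ is the set of Schröder paths: lattice paths from $(0,0)$ to $(n,n)$ using east $(1,0)$, north $(0,1)$ and diagonal $(1,1)$ steps never going below $y=x$. For an east or diagonal step $s$ with left-most point $(a,c)$, $ht(s)=c-a$. For a Schröder path $\pi$, $\tau_k(\pi)=\binom{0}{k-1}+\sum_s\binom{ht(s)}{k-1}$, summed over east and diagonal steps (with $\binom{i}{j}=0$ if $j<0$ or $i<j$). $\mathfrak S_m(1243,2143)$ is the set of permutations of $\{1,\dots,m\}$ with no subsequence of the same relative order as $1243$ or $2143$; a subsequence has type $\sigma$ if it has the same relative order as $\sigma$; $213\ldots k=2,1,3,\dots,k$. *)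

From mathcomp Require Import all_boot all_fingroup.
Set Implicit Arguments. Unset Strict Implicit. Unset Printing Implicit Defensive.

Inductive step := East | North | Diag.

(* [schroder_from a c n p]: the path p, started at the point (a,c) with a <= c,
   stays weakly above y = x at every lattice point and ends at (n,n). *)
Fixpoint schroder_from (a c n : nat) (p : seq step) : bool :=
  match p with
  | [::] => (a == n) && (c == n)
  | North :: q => schroder_from a c.+1 n q
  | East :: q => (a < c) && schroder_from a.+1 c n q
  | Diag :: q => schroder_from a.+1 c.+1 n q
  end.

Definition is_schroder (n : nat) (p : seq step) : bool := schroder_from 0 0 n p.

Definition schroder_path (n : nat) := {p : seq step | is_schroder n p}.

(* heights ht(s) = c - a of the east and diagonal steps s, whose left-most
   point is (a,c), when the path starts at (a,c). *)
Fixpoint heights_from (a c : nat) (p : seq step) : seq nat :=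
  match p with
  | [::] => [::]
  | North :: q => heights_from a c.+1 q
  | East :: q => (c - a) :: heights_from a.+1 c q
  | Diag :: q => (c - a) :: heights_from a.+1 c.+1 q
  end.

Definition tau (k : nat) (p : seq step) : nat :=
  'C(0, k.-1) + \sum_(h <- heights_from 0 0 p) 'C(h, k.-1).

(* Number of subsequences of the permutation w (one-line notation
   w(0) w(1) ... w(m-1)) having the same relative order as the pattern pat
   (given by a sequence of distinct naturals): a subsequence is a strictly
   increasing choice of positions f 0 < f 1 < ... < f (size pat - 1). *)
Definition occurrences (pat : seq nat) (m : nat) (w : {perm 'I_m}) : nat :=
  #|[set f : {ffun 'I_(size pat) -> 'I_m} |
      [forall i : 'I_(size pat), forall j : 'I_(size pat),
         ((i < j) ==> (f i < f j)) &&
         ((w (f i) < w (f j)) == (nth 0 pat i < nth 0 pat j))]]|.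

Definition pat1243 : seq nat := [:: 0; 1; 3; 2].
Definition pat2143 : seq nat := [:: 1; 0; 3; 2].
(* the pattern 2 1 3 4 ... k, shifted to 0-based values *)
Definition pat213k (k : nat) : seq nat := [:: 1, 0 & iota 2 (k - 2)].

Definition avoids_1243_2143 (m : nat) (w : {perm 'I_m}) : bool :=
  (occurrences pat1243 w == 0) && (occurrences pat2143 w == 0).

Definition av_perm (m : nat) := {w : {perm 'I_m} | avoids_1243_2143 w}.

From mathcomp Require Import all_boot all_fingroup.
From mathcomp Require Import zify.
Set Implicit Arguments. Unset Strict Implicit. Unset Printing Implicit Defensive.

(* Already the path N^k E^k defeats any such family, bijective or not. Its
   east steps have heights k, k-1, ..., 1, so tau_k = sum_(h <= k) C(h, k-1)
   = C(k+1, k) = k+1. On the other side, an occurrence of a pattern of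
   length k in a permutation w of length k+1 is a strictly increasing map
   of positions, and there are only C(k+1, k) = k+1 of those; the two that
   omit the first and the last position cannot both be occurrences of a
   pattern starting with 2 1 3, as they would force
   w(2) < w(1) < w(0) < w(2). So w has at most k such occurrences. *)

Definition increasing_ffun m n :=
  [set f : {ffun 'I_m -> 'I_n} | [forall i : 'I_m, forall j : 'I_m, (i < j) ==> (f i < f j)]].

Lemma card_increasing_ffun_le m n : #|increasing_ffun m n| <= 'C(n, m).
Proof.
rewrite -card_ltn_sorted_tuples.
pose graph (f : {ffun 'I_m -> 'I_n}) := [tuple f i | i < m].
have graph_inj : injective graph.
  by move=> f g fg; apply/ffunP=> i; rewrite -!(tnth_mktuple f) -/(graph _) fg tnth_mktuple.
rewrite -(card_imset _ graph_inj); apply/subset_leq_card/subsetP => _ /imsetP[f + ->].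
rewrite !inE => /forallP f_incr.
rewrite sorted_pairwise; last exact: ltn_trans.
apply/(pairwiseP 0) => i j; rewrite !inE size_map size_tuple => im jm ij.
rewrite !(nth_map (f (Ordinal im))) ?size_tuple //.
rewrite -[i]/(Ordinal im : nat) -[j]/(Ordinal jm : nat) !nth_mktuple.
by have /forallP/(_ (Ordinal jm))/implyP := f_incr (Ordinal im); apply.
Qed.

Lemma lift_increasing n (h : 'I_n.+1) : [ffun i => lift h i] \in increasing_ffun n n.+1.
Proof.
rewrite inE; apply/forallP => i; apply/forallP => j; apply/implyP => ij.
by rewrite !ffunE /= /bump; case: (leqP h i); case: (leqP h j) => /=; lia.
Qed.

Lemma occurrences_213_le m (pat : seq nat) (w : {perm 'I_m.+1}) :
  size pat = m -> nth 0 pat 1 < nth 0 pat 0 < nth 0 pat 2 ->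
  occurrences pat w <= m.
Proof.
move=> size_pat /andP[pat10 pat02]; subst m; set n := size pat.
have n_gt2 : 2 < n by rewrite ltnNge; apply: contraTN pat02 => /(nth_default 0) ->.
pose i0 := Ordinal (ltnW (ltnW n_gt2)); pose i1 := Ordinal (ltnW n_gt2).
pose i2 := Ordinal n_gt2.
rewrite /occurrences; set occ := [set f | _].
have occ_cmp f : f \in occ -> forall i j, (w (f i) < w (f j)) = (nth 0 pat i < nth 0 pat j).
  by rewrite inE => /forallP f_occ i j; have /forallP/(_ j)/andP[_ /eqP] := f_occ i.
have occ_incr : occ \subset increasing_ffun n n.+1.
  apply/subsetP => f; rewrite !inE => /forallP f_occ.
  by apply/forallP => i; apply/forallP => j; have /forallP/(_ j)/andP[] := f_occ i.
pose skip_first := [ffun i : 'I_n => lift ord0 i].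
pose skip_last := [ffun i : 'I_n => lift ord_max i].
have not_both : ~~ ((skip_first \in occ) && (skip_last \in occ)).
  apply/negP => /andP[/occ_cmp first /occ_cmp last].
  have e01 : lift ord0 i0 = lift ord_max i1 by apply: val_inj; rewrite /= /bump; lia.
  have e12 : lift ord0 i1 = lift ord_max i2 by apply: val_inj; rewrite /= /bump; lia.
  have := first i1 i0; have := last i1 i0; have := last i0 i2.
  rewrite !ffunE e01 e12 pat10 pat02 => lt02 lt10 lt21.
  by have := ltn_trans lt21 (ltn_trans lt10 lt02); rewrite ltnn.
have occ_proper : occ \proper increasing_ffun n n.+1.
  rewrite properE occ_incr; apply: contra not_both => /subsetP sub.
  by rewrite !sub ?lift_increasing.
have := leq_trans (proper_card occ_proper) (card_increasing_ffun_le n n.+1).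
by rewrite binSn ltnS.
Qed.

Lemma schroder_from_nseq_North a c n m q :
  schroder_from a c n (nseq m North ++ q) = schroder_from a (c + m) n q.
Proof. by elim: m c => [|m IHm] c /=; rewrite ?addn0 ?IHm ?addSnnS. Qed.

Lemma schroder_from_nseq_East a m : schroder_from a (a + m) (a + m) (nseq m East).
Proof.
elim: m a => [|m IHm] a /=; first by rewrite addn0 !eqxx.
by rewrite -addSnnS IHm andbT ltn_addr.
Qed.

Lemma heights_from_nseq_North a c m q :
  heights_from a c (nseq m North ++ q) = heights_from a (c + m) q.
Proof. by elim: m c => [|m IHm] c /=; rewrite ?addn0 ?IHm ?addSnnS. Qed.

Lemma heights_from_nseq_East a c m :
  heights_from a c (nseq m East) = [seq c - i | i <- iota a m].
Proof. by elim: m a => [|m IHm] a //=; rewrite IHm. Qed.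

Definition north_east_path n := nseq n North ++ nseq n East.

Lemma north_east_path_schroder n : is_schroder n (north_east_path n).
Proof. by rewrite /is_schroder schroder_from_nseq_North add0n schroder_from_nseq_East. Qed.

Lemma sum_bin_upper n k : \sum_(0 <= i < n) 'C(i, k) = 'C(n, k.+1).
Proof.
elim: n => [|n IHn]; first by rewrite big_geq.
by rewrite big_nat_recr // IHn binS.
Qed.

Lemma tau_north_east_path n k : 0 < k -> tau k (north_east_path n) = 'C(n.+1, k).
Proof.
case: k => // k _; rewrite /tau heights_from_nseq_North add0n heights_from_nseq_East.
rewrite big_map -sum_bin_upper big_nat_recl // [in RHS]big_nat_rev /index_iota subn0 /=.
congr (_ + _); apply: eq_big_seq => i; rewrite mem_iota add0n => lt_in.
by rewrite subnSK.
Qed.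

Lemma size_pat213k k : 2 <= k -> size (pat213k k) = k.
Proof. by move=> k_ge2; rewrite /= size_iota -addn2 subnK. Qed.

Lemma pat213k_starts_213 k : 3 <= k ->
  nth 0 (pat213k k) 1 < nth 0 (pat213k k) 0 < nth 0 (pat213k k) 2.
Proof. by case: k => [|[|[|k]]]. Qed.

Theorem mainTheorem18 (k : nat) : 3 <= k ->
  ~ exists omega : forall n : nat, schroder_path n -> av_perm n.+1,
      (forall n, bijective (omega n)) /\
      (forall n (pi : schroder_path n),
         tau k (sval pi) = occurrences (pat213k k) (sval (omega n pi))).
Proof.
move=> k_ge3 [omega [_ tau_occ]].
pose pi : schroder_path k := exist _ (north_east_path k) (north_east_path_schroder k).
have := tau_occ k pi; rewrite (tau_north_east_path _ (ltnW (ltnW k_ge3))) binSn.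
have := occurrences_213_le (sval (omega k pi)) (size_pat213k (ltnW k_ge3))
          (pat213k_starts_213 k_ge3).
by move=> occ_le tau_eq; move: occ_le; rewrite -tau_eq ltnn.
Qed.
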